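(* Let $I=\langle Q,D,\tau_{in},\tau_{out}\rangle$ be an instance of DTP where $Q$ is nonrecursive, connected, and contains no rigid atoms. Then DTP holds for $I$ if and only if for every tuple $\vec o$ over $C_I$, $\vec o\in Q(D\cup B_I,\tau_{out})$ implies $\vec o\in Q(D,\tau_{out})$, where $B_I$ is the bounded critical update of $I$.
   Context: Temporal Datalog. Constants are partitioned into objects and integer time points; variables into object variables and time variables. A time term is a time point, a time variable, or an expression $t+k$ with $t$ a time variable and $k\in\mathbb{Z}$. Each predicate is either extensional (EDB) or intensional (IDB) and has an arity $n\ge0$, each position being of object sort or time sort; a predicate is rigid if all its positions are of object sort, and temporal if its last position is of time sort and all others are of object sort. An atom $P(t_1,\dots,t_n)$ has terms of the required sorts. A rule is $\bigwedge_i\alpha_i\to\alpha$ with $\alpha$ and all $\alpha_i$ rigid or temporal atoms, $\alpha$ IDB whenever the body is nonempty, and every head variable occurring in the body. A program is a finite set of rules. A fact is a ground rigid or temporal atom without $+$ (identified with the rule $\top\to\alpha$); a dataset is a finite set of EDB facts. Rules are read as universally quantified first-order sentences with $+$ interpreted as integer addition; $\Pi\models\alpha$ denotes entailment. A query is $Q=\langle P_Q,\Pi_Q\rangle$ with $\Pi_Q$ a program and $P_Q$ an IDB predicate of $\Pi_Q$; it is temporal if $P_Q$ is temporal. For a temporal query $Q$, dataset $D$ and time point $\tau$, $Q(D,\tau)$ is the set of tuples of objects $\vec o$ with $\Pi_Q\cup D\models P_Q(\vec o,\tau)$. A $\tau_{in}$-history is a dataset consisting of rigid facts and temporal facts with time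 argument $\le\tau_{in}$; a $\tau_{in}$-update is a dataset consisting of temporal facts with time argument $>\tau_{in}$. Definitive Time Point (DTP): an instance is $\langle Q,D,\tau_{in},\tau_{out}\rangle$ with $Q$ a temporal query, $D$ a $\tau_{in}$-history and $\tau_{out}\le\tau_{in}$; DTP holds for it iff $Q(D,\tau_{out})=Q(D\cup U,\tau_{out})$ for every $\tau_{in}$-update $U$. Critical domain: $C_I$ is the set of all objects occurring in $\Pi_Q\cup D$ together with one fresh object $o_I$. Predicate $P$ depends on $P'$ in $\Pi$ if some rule of $\Pi$ has $P$ in the head and $P'$ in the body; $\Pi$ (or a query with program $\Pi$) is nonrecursive if the graph of this dependency relation is acyclic. A rule is connected if it contains at most one time variable and, if a time variable occurs in the body, it also occurs in the head; a query is connected if all its rules are. For a time term $s$, $\Delta(s)=k$ if $s=t+k$ with $t$ a variable, and $\Delta(s)=0$ otherwise. The radius of a connected rule $r$ mentioning a time variable is the maximum of $|\Delta(s)-\Delta(s')|$ where $s$ is the time argument of the head and $s'$ the time argument of a body atom of $r$. The radius $\mathrm{rad}(\Pi)$ of a connected program is the number of rules of $\Pi$ times the maximum radius of a rule of $\Pi$. Bounded critical update: let $\tau_0$ be the maximum of $\tau_{out}$ and the largest time point occurring in $\Pi_Q$; a time point $\tau$ is critical for $I$ if $\tau_{in}<\tau\le\tau_0+\mathrm{rad}(\Pi_Q)$; $B_I$ consists of all facts $P(\vec o,\tau)$ with $P$ a temporal EDB predicate of $\Pi_Q$, $\vec o$ a tuple over $C_I$ and $\tau$ critical. *)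

From Stdlib Require Import ZArith List Relations.
Import ListNotations.
Open Scope Z_scope.

Inductive sort := SObj | STime.

(* A predicate: a name, the sorts of its positions (arity = length), and
   whether it is extensional (EDB, true) or intensional (IDB, false). *)
Record predicate := mkPred { pid : nat; psig : list sort; pedb : bool }.

(* Objects and object variables are indexed by nat; time points are integers;
   time variables are indexed by nat.  [TVar t k] is the time term t+k
   (the plain variable t is TVar t 0). *)
Inductive term :=
| OConst (o : nat)
| OVar (x : nat)
| TConst (z : Z)
| TVar (t : nat) (k : Z).

Record atom := mkAtom { apred : predicate; aargs : list term }.

Record rule := mkRule { rbody : list atom; rhead : atom }.

Definition program := list rule.

Definition dataset := atom -> Prop.

Definition union (D U : dataset) : dataset := fun f => D f \/ U f.

Definition term_sort (s : term) : sort :=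
  match s with OConst _ | OVar _ => SObj | TConst _ | TVar _ _ => STime end.

Definition atom_wf (a : atom) : Prop := map term_sort (aargs a) = psig (apred a).

Definition rigid_pred (P : predicate) : Prop := Forall (fun s => s = SObj) (psig P).
Definition temporal_pred (P : predicate) : Prop :=
  exists n, psig P = repeat SObj n ++ [STime].

Definition rule_atoms (r : rule) : list atom := rhead r :: rbody r.

Definition ovars_term (s : term) : list nat :=
  match s with OVar x => [x] | _ => [] end.
Definition tvars_term (s : term) : list nat :=
  match s with TVar t _ => [t] | _ => [] end.
Definition ovars_atom (a : atom) : list nat := flat_map ovars_term (aargs a).
Definition tvars_atom (a : atom) : list nat := flat_map tvars_term (aargs a).

Definition rule_wf (r : rule) : Prop :=
  (forall a, In a (rule_atoms r) ->
     atom_wf a /\ (rigid_pred (apred a) \/ temporal_pred (apred a))) /\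
  (rbody r <> [] -> pedb (apred (rhead r)) = false) /\
  (forall x, In x (ovars_atom (rhead r)) -> In x (flat_map ovars_atom (rbody r))) /\
  (forall t, In t (tvars_atom (rhead r)) -> In t (flat_map tvars_atom (rbody r))).

(* A program is a finite set of rules: a duplicate-free list. *)
Definition program_ok (P : program) : Prop := NoDup P /\ Forall rule_wf P.

Definition ground_term (s : term) : Prop :=
  match s with OConst _ | TConst _ => True | _ => False end.

Definition is_fact (a : atom) : Prop :=
  atom_wf a /\ (rigid_pred (apred a) \/ temporal_pred (apred a)) /\
  Forall ground_term (aargs a).

Definition dataset_ok (D : dataset) : Prop :=
  (exists l, forall f, D f -> In f l) /\
  (forall f, D f -> is_fact f /\ pedb (apred f) = true).

Definition time_arg (a : atom) : term := last (aargs a) (TConst 0).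

Definition pred_in_prog (P : program) (p : predicate) : Prop :=
  exists r a, In r P /\ In a (rule_atoms r) /\ apred a = p.

Record query := mkQuery { qpred : predicate; qprog : program }.

Definition query_ok (Q : query) : Prop :=
  program_ok (qprog Q) /\ pedb (qpred Q) = false /\ pred_in_prog (qprog Q) (qpred Q).

Definition temporal_query (Q : query) : Prop :=
  query_ok Q /\ temporal_pred (qpred Q).

(* A first-order structure: an arbitrary (nonempty, since it interprets the
   object constants) object domain; the time sort is interpreted as Z with
   + as integer addition. *)
Record interp (Dom : Type) := mkInterp {
  iobj : nat -> Dom;
  irel : predicate -> list (Dom + Z) -> Prop }.
Arguments iobj {Dom}.
Arguments irel {Dom}.

Definition eval_term {Dom : Type} (I : interp Dom) (vo : nat -> Dom) (vt : nat -> Z)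
  (s : term) : Dom + Z :=
  match s with
  | OConst o => inl (iobj I o)
  | OVar x => inl (vo x)
  | TConst z => inr z
  | TVar t k => inr (vt t + k)
  end.

Definition holds {Dom : Type} (I : interp Dom) (vo : nat -> Dom) (vt : nat -> Z)
  (a : atom) : Prop :=
  irel I (apred a) (map (eval_term I vo vt) (aargs a)).

Definition sat_rule {Dom : Type} (I : interp Dom) (r : rule) : Prop :=
  forall vo vt, (forall b, In b (rbody r) -> holds I vo vt b) -> holds I vo vt (rhead r).

(* P ∪ D |= alpha  (facts identified with rules  T -> alpha). *)
Definition entails (P : program) (D : dataset) (alpha : atom) : Prop :=
  forall (Dom : Type) (I : interp Dom),
    (forall r, In r P -> sat_rule I r) ->
    (forall f, D f -> sat_rule I (mkRule [] f)) ->
    forall vo vt, holds I vo vt alpha.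

Definition answers (Q : query) (D : dataset) (tau : Z) (o : list nat) : Prop :=
  length o = Nat.pred (length (psig (qpred Q))) /\
  entails (qprog Q) D (mkAtom (qpred Q) (map OConst o ++ [TConst tau])).

Definition history (tin : Z) (D : dataset) : Prop :=
  dataset_ok D /\
  forall f, D f ->
    rigid_pred (apred f) \/
    (temporal_pred (apred f) /\ exists z, time_arg f = TConst z /\ z <= tin).

Definition update (tin : Z) (U : dataset) : Prop :=
  dataset_ok U /\
  forall f, U f -> temporal_pred (apred f) /\ exists z, time_arg f = TConst z /\ tin < z.

Definition DTP_instance (Q : query) (D : dataset) (tin tout : Z) : Prop :=
  temporal_query Q /\ history tin D /\ tout <= tin.

Definition DTP (Q : query) (D : dataset) (tin tout : Z) : Prop :=
  forall U, update tin U ->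
    forall o, answers Q D tout o <-> answers Q (union D U) tout o.

Definition depends (P : program) (p p' : predicate) : Prop :=
  exists r, In r P /\ apred (rhead r) = p /\ exists b, In b (rbody r) /\ apred b = p'.

Definition nonrecursive (P : program) : Prop :=
  forall p, ~ clos_trans predicate (depends P) p p.

Definition rule_tvars (r : rule) : list nat := flat_map tvars_atom (rule_atoms r).

Definition connected_rule (r : rule) : Prop :=
  (forall t1 t2, In t1 (rule_tvars r) -> In t2 (rule_tvars r) -> t1 = t2) /\
  (forall t, In t (flat_map tvars_atom (rbody r)) -> In t (tvars_atom (rhead r))).

Definition connected_query (Q : query) : Prop := Forall connected_rule (qprog Q).

Definition no_rigid_atoms (P : program) : Prop :=
  forall r a, In r P -> In a (rule_atoms r) -> ~ rigid_pred (apred a).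

Definition delta (s : term) : Z := match s with TVar _ k => k | _ => 0 end.

(* Radius of a connected rule mentioning a time variable; 0 for rules that
   mention no time variable (they do not contribute to the maximum). *)
Definition rule_radius (r : rule) : Z :=
  match rule_tvars r with
  | [] => 0
  | _ => fold_right Z.max 0
           (map (fun b => Z.abs (delta (time_arg (rhead r)) - delta (time_arg b))) (rbody r))
  end.

Definition prog_radius (P : program) : Z :=
  Z.of_nat (length P) * fold_right Z.max 0 (map rule_radius P).

Definition obj_in_atom (o : nat) (a : atom) : Prop := In (OConst o) (aargs a).

Definition obj_in_prog (P : program) (o : nat) : Prop :=
  exists r a, In r P /\ In a (rule_atoms r) /\ obj_in_atom o a.

Definition obj_in_data (D : dataset) (o : nat) : Prop :=
  exists f, D f /\ obj_in_atom o f.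

Definition fresh_obj (Q : query) (D : dataset) (oI : nat) : Prop :=
  ~ obj_in_prog (qprog Q) oI /\ ~ obj_in_data D oI.

Definition critical_domain (Q : query) (D : dataset) (oI : nat) (o : nat) : Prop :=
  obj_in_prog (qprog Q) o \/ obj_in_data D o \/ o = oI.

Definition term_times (s : term) : list Z :=
  match s with TConst z => [z] | _ => [] end.

Definition prog_times (P : program) : list Z :=
  flat_map (fun r => flat_map (fun a => flat_map term_times (aargs a)) (rule_atoms r)) P.

Definition tau0 (Q : query) (tout : Z) : Z := fold_right Z.max tout (prog_times (qprog Q)).

Definition critical (Q : query) (tin tout tau : Z) : Prop :=
  tin < tau /\ tau <= tau0 Q tout + prog_radius (qprog Q).

Definition bcu (Q : query) (D : dataset) (tin tout : Z) (oI : nat) : dataset :=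
  fun f => exists p o tau,
    pred_in_prog (qprog Q) p /\ pedb p = true /\ temporal_pred p /\
    Forall (critical_domain Q D oI) o /\ length o = Nat.pred (length (psig p)) /\
    critical Q tin tout tau /\
    f = mkAtom p (map OConst o ++ [TConst tau]).

(* Only the right-to-left direction needs work. Given an update U and an answer
   o over D ∪ U, first discard the facts of U that backward chaining from the goal
   P_Q(o, τ_out) can never require: along a chain of rule applications the head
   predicates are pairwise distinct (nonrecursiveness), so a chain has at most |Π_Q|
   steps, and each step raises the time by at most the maximal rule radius
   (connectedness), so every required fact has time at most τ_0 + rad(Π_Q).  Then
   send every object outside C_I to the fresh object o_I: this fixes the constants of
   Π_Q and D, turns the remaining facts of U into facts of B_I, and turns o into an
   answer over D ∪ B_I, hence over D.  Finally, no answer over D mentions o_I, so o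
   already lies in C_I. *)

From Stdlib Require Import ZArith List Relations Lia Classical ClassicalEpsilon.
Import ListNotations.
Open Scope Z_scope.

Lemma fold_max_ge_in (l : list Z) d x : In x l -> x <= fold_right Z.max d l.
Proof.
  induction l as [|y l IH]; simpl; [tauto|].
  intros [->|Hx]; [lia|]. specialize (IH Hx); lia.
Qed.

Lemma fold_max_ge_init (l : list Z) d : d <= fold_right Z.max d l.
Proof. induction l; simpl; lia. Qed.

Lemma temporal_args_split (l : list term) n :
  map term_sort l = repeat SObj n ++ [STime] ->
  exists l' s, l = l' ++ [s] /\ Forall (fun s => term_sort s = SObj) l' /\
               term_sort s = STime.
Proof.
  intros Hl. apply map_eq_app in Hl as [l' [ls [-> [Hl' Hls]]]].
  apply map_eq_cons in Hls as [s [tl [-> [Hs Htl]]]].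
  apply map_eq_nil in Htl as ->.
  exists l', s. split; [reflexivity|]. split; [|exact Hs].
  apply Forall_forall. intros x Hx.
  apply (repeat_spec n). rewrite <- Hl'. now apply in_map.
Qed.

Lemma time_arg_split (a : atom) l' s : aargs a = l' ++ [s] -> time_arg a = s.
Proof. intros Ha. unfold time_arg. rewrite Ha. apply last_last. Qed.

Lemma time_arg_temporal (a : atom) n :
  map term_sort (aargs a) = repeat SObj n ++ [STime] ->
  term_sort (time_arg a) = STime /\ In (time_arg a) (aargs a).
Proof.
  intros Ha. destruct (temporal_args_split _ _ Ha) as [l' [s [Hs [_ Hsort]]]].
  rewrite (time_arg_split _ _ _ Hs), Hs. split; [exact Hsort|].
  apply in_or_app. now right; left.
Qed.

Lemma tvar_time_arg (a : atom) n t k :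
  map term_sort (aargs a) = repeat SObj n ++ [STime] ->
  In (TVar t k) (aargs a) -> time_arg a = TVar t k.
Proof.
  intros Ha Hin. destruct (temporal_args_split _ _ Ha) as [l' [s [Hs [Hobj _]]]].
  rewrite (time_arg_split _ _ _ Hs). rewrite Hs in Hin.
  apply in_app_or in Hin as [Hin|[->|[]]]; [|reflexivity].
  rewrite Forall_forall in Hobj. discriminate (Hobj _ Hin).
Qed.

Lemma ground_temporal_args (l : list term) n :
  map term_sort l = repeat SObj n ++ [STime] -> Forall ground_term l ->
  exists os z, l = map OConst os ++ [TConst z] /\ length os = n.
Proof.
  intros Hl Hg. pose proof (f_equal (@length _) Hl) as Hlen.
  destruct (temporal_args_split _ _ Hl) as [l' [s [-> [Hobj Hs]]]].
  apply Forall_app in Hg as [Hg' Hgs]. inversion_clear Hgs as [|? ? Hgs' _].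
  destruct s as [| |z|]; try contradiction; try discriminate.
  rewrite length_map, !length_app, repeat_length in Hlen. simpl in Hlen.
  enough (Hos : exists os, l' = map OConst os).
  { destruct Hos as [os ->]. exists os, z. rewrite length_map in Hlen. split; [reflexivity|lia]. }
  clear Hl Hlen. induction l' as [|s l' IH]; [now exists []|].
  inversion_clear Hobj as [|? ? Hs1 Hobj']. inversion_clear Hg' as [|? ? Hg1 Hg''].
  destruct (IH Hg'' Hobj') as [os ->].
  destruct s as [c| | |]; try contradiction; try discriminate. now exists (c :: os).
Qed.

Lemma entails_mono P (D1 D2 : dataset) a :
  (forall f, D1 f -> D2 f) -> entails P D1 a -> entails P D2 a.
Proof. intros Hincl E Dom I HP HD. apply E; auto. Qed.

Definition rename_term (h : nat -> nat) (s : term) : term :=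
  match s with OConst c => OConst (h c) | _ => s end.

Definition rename_atom (h : nat -> nat) (a : atom) : atom :=
  mkAtom (apred a) (map (rename_term h) (aargs a)).

Definition rename_data (h : nat -> nat) (D : dataset) : dataset :=
  fun f => exists g, D g /\ f = rename_atom h g.

Lemma holds_rename {Dom} (I : interp Dom) h vo vt a :
  holds (mkInterp Dom (fun c => iobj I (h c)) (irel I)) vo vt a <->
  holds I vo vt (rename_atom h a).
Proof.
  unfold holds, rename_atom; simpl. rewrite map_map.
  erewrite map_ext; [reflexivity|]. now intros [].
Qed.

Lemma rename_atom_id h a : (forall c, obj_in_atom c a -> h c = c) -> rename_atom h a = a.
Proof.
  destruct a as [p args]. unfold rename_atom, obj_in_atom; simpl. intros Hfix. f_equal.
  rewrite <- (map_id args) at 2. apply map_ext_in.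
  intros [c| | |] Hc; simpl; try rewrite Hfix; auto.
Qed.

Lemma rename_goal h p os (z : Z) :
  rename_atom h (mkAtom p (map OConst os ++ [TConst z])) =
  mkAtom p (map OConst (map h os) ++ [TConst z]).
Proof. unfold rename_atom; simpl. now rewrite !map_app, !map_map. Qed.

(* Reading each constant [c] as [h c] turns a model of [P] and [rename_data h D] into
   a model of [P] and [D]. *)
Lemma entails_rename P D a h :
  (forall c, obj_in_prog P c -> h c = c) ->
  entails P D a -> entails P (rename_data h D) (rename_atom h a).
Proof.
  intros Hfix E Dom I HP HD vo vt. apply (holds_rename I h), E.
  - intros r Hr vo' vt' Hbody.
    assert (Hid : forall b, In b (rule_atoms r) -> rename_atom h b = b).
    { intros b Hb. apply rename_atom_id. intros c Hc. apply Hfix. now exists r, b. }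
    apply (holds_rename I h). rewrite Hid by now left.
    apply (HP r Hr). intros b Hb. rewrite <- (Hid b) by now right.
    now apply (holds_rename I h), Hbody.
  - intros f Hf vo' vt' _. apply (holds_rename I h).
    apply (HD _ (ex_intro _ f (conj Hf eq_refl))). intros _ [].
Qed.

Lemma entails_avoids_fresh P D a oI :
  Forall rule_wf P -> dataset_ok D ->
  ~ obj_in_prog P oI -> ~ obj_in_data D oI ->
  entails P D a -> ~ obj_in_atom oI a.
Proof.
  intros Hwf [_ HD] HfP HfD E Ha.
  set (I := mkInterp nat (fun c => c) (fun _ args => ~ In (inl oI) args)).
  assert (HDI : forall f, D f -> sat_rule I (mkRule [] f)).
  { intros f Hf vo vt _ Hin. apply in_map_iff in Hin as [s [Hs Hsin]].
    destruct (HD f Hf) as [[_ [_ Hground]] _]. rewrite Forall_forall in Hground.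
    specialize (Hground s Hsin).
    destruct s; try contradiction; try discriminate. injection Hs as ->.
    now apply HfD; exists f. }
  assert (HPI : forall r, In r P -> sat_rule I r).
  { intros r Hr vo vt Hbody Hin. apply in_map_iff in Hin as [s [Hs Hsin]].
    destruct s as [c|x| |]; try discriminate; injection Hs as Hs; subst.
    - apply HfP. exists r, (rhead r). split; [exact Hr|]. split; [now left|exact Hsin].
    - rewrite Forall_forall in Hwf. destruct (Hwf r Hr) as [_ [_ [Hvars _]]].
      destruct (in_flat_map ovars_atom (rbody r) x) as [Hbx _].
      destruct Hbx as [b [Hb Hxb]].
      { apply Hvars, in_flat_map. now exists (OVar x); split; [|left]. }
      apply in_flat_map in Hxb as [s [Hs Hxs]]. destruct s; try contradiction.
      destruct Hxs as [<-|[]]. apply (Hbody b Hb), in_map_iff. now exists (OVar x0). }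
  apply (E nat I HPI HDI (fun _ => oI) (fun _ => 0)), in_map_iff. now exists (OConst oI).
Qed.

Lemma retraction_onto (A : nat -> Prop) a :
  A a -> exists h, (forall c, A c -> h c = c) /\ (forall c, ~ A c -> h c = a) /\
                   (forall c, A (h c)).
Proof.
  intros Ha. exists (fun c => if excluded_middle_informative (A c) then c else a).
  repeat split; intros c; destruct excluded_middle_informative; tauto.
Qed.

Fixpoint tuples {A} (L : list A) (n : nat) : list (list A) :=
  match n with
  | O => [[]]
  | S n' => flat_map (fun x => map (cons x) (tuples L n')) L
  end.

Lemma tuples_complete {A} (L o : list A) : incl o L -> In o (tuples L (length o)).
Proof.
  induction o as [|x o IH]; simpl; intros Hincl; [now left|].
  apply in_flat_map. exists x. split; [apply Hincl; now left|].
  apply in_map, IH. intros y Hy. apply Hincl. now right.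
Qed.

Definition atom_objs (a : atom) : list nat :=
  flat_map (fun s => match s with OConst c => [c] | _ => [] end) (aargs a).

Lemma obj_in_atom_objs c a : obj_in_atom c a -> In c (atom_objs a).
Proof. intros Hc. apply in_flat_map. exists (OConst c). split; [exact Hc|now left]. Qed.

Lemma critical_domain_finite Q D oI :
  dataset_ok D -> exists L, forall c, critical_domain Q D oI c -> In c L.
Proof.
  intros [[lD HlD] _].
  exists (flat_map (fun r => flat_map atom_objs (rule_atoms r)) (qprog Q) ++
          flat_map atom_objs lD ++ [oI]).
  intros c [[r [a [Hr [Ha Hc]]]]|[[g [Hg Hc]]| ->]]; apply in_or_app.
  - left. apply in_flat_map. exists r. split; [exact Hr|].
    apply in_flat_map. exists a. split; [exact Ha|now apply obj_in_atom_objs].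
  - right. apply in_or_app. left. apply in_flat_map. exists g.
    split; [now apply HlD|now apply obj_in_atom_objs].
  - right. apply in_or_app. now right; left.
Qed.

Lemma critical_finite Q tin tout :
  exists Lt, forall tau, critical Q tin tout tau -> In tau Lt.
Proof.
  set (bound := tau0 Q tout + prog_radius (qprog Q)).
  exists (map (fun i => tin + 1 + Z.of_nat i) (seq 0 (Z.to_nat (bound - tin)))).
  intros tau [Hlo Hhi]. apply in_map_iff. exists (Z.to_nat (tau - tin - 1)).
  split; [lia|]. apply in_seq. unfold bound in *. lia.
Qed.

Lemma pred_in_prog_finite P : exists Lp, forall p, pred_in_prog P p -> In p Lp.
Proof.
  exists (flat_map (fun r => map apred (rule_atoms r)) P).
  intros p [r [a [Hr [Ha <-]]]]. apply in_flat_map. exists r. split; [exact Hr|now apply in_map].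
Qed.

Lemma map_OConst_sort (os : list nat) : map term_sort (map OConst os) = repeat SObj (length os).
Proof. induction os; simpl; f_equal; auto. Qed.

Lemma bcu_update Q D tin tout oI : dataset_ok D -> update tin (bcu Q D tin tout oI).
Proof.
  intros HD. split; [split|].
  - destruct (critical_domain_finite Q D oI HD) as [L HL].
    destruct (critical_finite Q tin tout) as [Lt HLt].
    destruct (pred_in_prog_finite (qprog Q)) as [Lp HLp].
    exists (flat_map (fun p => flat_map (fun tau =>
              map (fun o => mkAtom p (map OConst o ++ [TConst tau]))
                  (tuples L (Nat.pred (length (psig p))))) Lt) Lp).
    intros f [p [o [tau [Hp [_ [_ [Ho [Hlen [Htau ->]]]]]]]]].
    apply in_flat_map. exists p. split; [now apply HLp|].
    apply in_flat_map. exists tau. split; [now apply HLt|].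
    apply (in_map (fun o => mkAtom p (map OConst o ++ [TConst tau]))).
    rewrite <- Hlen. apply tuples_complete. intros c Hc.
    apply HL. exact (proj1 (Forall_forall _ _) Ho c Hc).
  - intros f [p [o [tau [_ [Hedb [[n Hsig] [_ [Hlen [_ ->]]]]]]]]].
    split; [|exact Hedb]. split; [|split].
    + unfold atom_wf; simpl. rewrite map_app, map_OConst_sort, Hsig.
      rewrite Hsig, length_app, repeat_length in Hlen. simpl in Hlen. do 2 f_equal. lia.
    + right. now exists n.
    + apply Forall_app. split; [|now constructor].
      apply Forall_forall. intros x Hx. apply in_map_iff in Hx as [c [<- _]]. exact I.
  - intros f [p [o [tau [_ [_ [Htemp [_ [_ [[Hlo _] ->]]]]]]]]].
    split; [exact Htemp|]. exists tau. split; [|exact Hlo].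
    apply (time_arg_split _ (map OConst o)). reflexivity.
Qed.

(* Object terms get the junk time [0]; they never occur in time position. *)
Definition time_value (vt : nat -> Z) (s : term) : Z :=
  match s with TConst z => z | TVar t k => vt t + k | _ => 0 end.

Definition args_time {Dom} (args : list (Dom + Z)) : Z :=
  match last args (inr 0) with inr z => z | inl _ => 0 end.

Lemma last_map {A B} (f : A -> B) (l : list A) d : last (map f l) (f d) = f (last l d).
Proof. induction l as [|x [|y l] IH]; simpl in *; auto. Qed.

Lemma args_time_eval {Dom} (I : interp Dom) vo vt a :
  args_time (map (eval_term I vo vt) (aargs a)) = time_value vt (time_arg a).
Proof.
  unfold args_time, time_arg.
  change (@inr Dom Z 0) with (eval_term I vo vt (TConst 0)). rewrite last_map.
  now destruct (last (aargs a) (TConst 0)).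
Qed.

Definition max_rule_radius (P : program) : Z := fold_right Z.max 0 (map rule_radius P).

Lemma max_rule_radius_ge0 P : 0 <= max_rule_radius P.
Proof. apply fold_max_ge_init. Qed.

Lemma rule_radius_ge r b :
  In b (rbody r) -> rule_tvars r <> [] ->
  Z.abs (delta (time_arg (rhead r)) - delta (time_arg b)) <= rule_radius r.
Proof.
  intros Hb Htv. unfold rule_radius. destruct (rule_tvars r); [contradiction|].
  apply fold_max_ge_in, in_map_iff. now exists b.
Qed.

Section Relevance.
Variables (Q : query) (tout : Z).

(* [reaches ps q tau]: backward chaining from the goal [(qpred Q, tout)] through rules
   with head predicates [ps] (most recent first) can require a fact of [q] at time [tau]. *)
Inductive reaches : list predicate -> predicate -> Z -> Prop :=
| reaches_goal : reaches [] (qpred Q) tout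
| reaches_body ps r vt b :
    reaches ps (apred (rhead r)) (time_value vt (time_arg (rhead r))) ->
    In r (qprog Q) -> In b (rbody r) ->
    reaches (apred (rhead r) :: ps) (apred b) (time_value vt (time_arg b)).

Definition relevant (q : predicate) (tau : Z) : Prop := exists ps, reaches ps q tau.

Definition relevant_part (U : dataset) : dataset :=
  fun f => U f /\ exists vt, relevant (apred f) (time_value vt (time_arg f)).

Definition relax_irrelevant {Dom} (I : interp Dom) : interp Dom :=
  mkInterp Dom (iobj I) (fun p args => irel I p args \/ ~ relevant p (args_time args)).

Lemma holds_relax_irrelevant {Dom} (I : interp Dom) vo vt a :
  holds (relax_irrelevant I) vo vt a <->
  holds I vo vt a \/ ~ relevant (apred a) (time_value vt (time_arg a)).
Proof.
  unfold holds; simpl.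
  rewrite (map_ext (eval_term (relax_irrelevant I) vo vt) (eval_term I vo vt)) by now intros [].
  now rewrite args_time_eval.
Qed.

(* Bodies of rules with relevant heads are relevant, so [relax_irrelevant I] still
   models the program. *)
Lemma entails_relevant_part D U a :
  apred a = qpred Q -> time_arg a = TConst tout ->
  entails (qprog Q) (union D U) a -> entails (qprog Q) (union D (relevant_part U)) a.
Proof.
  intros Hpred Htime E Dom I HP HD vo vt.
  assert (HP' : forall r, In r (qprog Q) -> sat_rule (relax_irrelevant I) r).
  { intros r Hr vo' vt' Hbody. apply holds_relax_irrelevant.
    destruct (classic (relevant (apred (rhead r)) (time_value vt' (time_arg (rhead r)))))
      as [[ps Hps]|Hirr]; [left|now right].
    apply (HP r Hr). intros b Hb.
    destruct (proj1 (holds_relax_irrelevant _ _ _ _) (Hbody b Hb)) as [Hholds|Hirr];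
      [exact Hholds|].
    exfalso. apply Hirr. exists (apred (rhead r) :: ps). now apply reaches_body. }
  assert (HD' : forall f, union D U f -> sat_rule (relax_irrelevant I) (mkRule [] f)).
  { intros f [Df|Uf] vo' vt' _; apply holds_relax_irrelevant.
    - left. apply (HD f (or_introl Df)). intros _ [].
    - destruct (classic (relevant (apred f) (time_value vt' (time_arg f)))) as [Hrel|];
        [left|now right].
      apply (HD f); [|intros _ []]. right. split; [exact Uf|]. now exists vt'. }
  destruct (proj1 (holds_relax_irrelevant _ _ _ _) (E Dom _ HP' HD' vo vt)) as [Hholds|Hirr];
    [exact Hholds|].
  exfalso. apply Hirr. rewrite Hpred, Htime. exists []. apply reaches_goal.
Qed.

Hypothesis Hwf : Forall rule_wf (qprog Q).
Hypothesis Hnonrec : nonrecursive (qprog Q).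
Hypothesis Hconn : connected_query Q.
Hypothesis Hnorigid : no_rigid_atoms (qprog Q).
Hypothesis Hgoal : pred_in_prog (qprog Q) (qpred Q).

Lemma rule_atom_temporal r a :
  In r (qprog Q) -> In a (rule_atoms r) ->
  exists n, map term_sort (aargs a) = repeat SObj n ++ [STime].
Proof.
  intros Hr Ha.
  destruct (proj1 (proj1 (Forall_forall _ _) Hwf r Hr) a Ha) as [Hsig [Hrig|[n Hn]]].
  - exfalso. exact (Hnorigid r a Hr Ha Hrig).
  - exists n. now rewrite Hsig.
Qed.

Lemma body_time_le r b vt :
  In r (qprog Q) -> In b (rbody r) ->
  time_value vt (time_arg b) <=
  Z.max (tau0 Q tout) (time_value vt (time_arg (rhead r)) + max_rule_radius (qprog Q)).
Proof.
  intros Hr Hb.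
  destruct (rule_atom_temporal r b Hr (or_intror Hb)) as [n Hn].
  destruct (rule_atom_temporal r (rhead r) Hr (or_introl eq_refl)) as [nh Hnh].
  destruct (time_arg_temporal b n Hn) as [Hsort Hin].
  destruct (time_arg b) as [| |z|t k] eqn:Htb; try discriminate; simpl.
  - enough (z <= tau0 Q tout) by lia.
    apply fold_max_ge_in, in_flat_map. exists r. split; [exact Hr|].
    apply in_flat_map. exists b. split; [now right|].
    apply in_flat_map. exists (TConst z). split; [exact Hin|now left].
  - assert (Ht_body : In t (flat_map tvars_atom (rbody r))).
    { apply in_flat_map. exists b. split; [exact Hb|].
      apply in_flat_map. exists (TVar t k). split; [exact Hin|now left]. }
    assert (Htvars : rule_tvars r <> []).
    { intros Hnil. assert (Ht_rule : In t (rule_tvars r)) by (apply in_or_app; now right).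
      now rewrite Hnil in Ht_rule. }
    destruct (proj1 (Forall_forall _ _) Hconn r Hr) as [_ Hbody_head].
    apply Hbody_head, in_flat_map in Ht_body.
    destruct Ht_body as [s [Hin_head Hts]].
    destruct s as [| | |t' k']; try contradiction. destruct Hts as [<-|[]].
    pose proof (tvar_time_arg _ _ _ _ Hnh Hin_head) as Hth.
    pose proof (rule_radius_ge r b Hb Htvars) as Hrad.
    rewrite Hth, Htb in Hrad. simpl in Hrad. rewrite Hth. simpl.
    assert (rule_radius r <= max_rule_radius (qprog Q)) by (apply fold_max_ge_in, in_map, Hr).
    lia.
Qed.

Lemma reaches_time_le ps q tau :
  reaches ps q tau -> tau <= tau0 Q tout + Z.of_nat (length ps) * max_rule_radius (qprog Q).
Proof.
  pose proof (max_rule_radius_ge0 (qprog Q)).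
  induction 1 as [|ps r vt b _ IH Hr Hb].
  - simpl. pose proof (fold_max_ge_init (prog_times (qprog Q)) tout). unfold tau0. lia.
  - pose proof (body_time_le r b vt Hr Hb).
    simpl length. rewrite Nat2Z.inj_succ. nia.
Qed.

Lemma reaches_acyclic ps q tau :
  reaches ps q tau -> NoDup ps /\ forall x, In x ps -> clos_trans _ (depends (qprog Q)) x q.
Proof.
  induction 1 as [|ps r vt b _ [Hnodup Hdeps] Hr Hb].
  - split; [constructor|intros _ []].
  - assert (Hdep : depends (qprog Q) (apred (rhead r)) (apred b))
      by now exists r; repeat split; [|exists b].
    split.
    + constructor; [|exact Hnodup]. intros Hin. exact (Hnonrec _ (Hdeps _ Hin)).
    + intros x [<-|Hx]; [now apply t_step|]. eapply t_trans; [apply Hdeps, Hx|now apply t_step].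
Qed.

Lemma reaches_heads ps q tau :
  reaches ps q tau -> incl ps (map (fun r => apred (rhead r)) (qprog Q)).
Proof.
  induction 1 as [|ps r vt b _ IH Hr Hb]; [intros _ []|].
  intros x [<-|Hx]; [exact (in_map (fun r => apred (rhead r)) _ _ Hr)|exact (IH x Hx)].
Qed.

Lemma reaches_pred_in_prog ps q tau : reaches ps q tau -> pred_in_prog (qprog Q) q.
Proof.
  destruct 1 as [|ps r vt b _ Hr Hb]; [exact Hgoal|].
  exists r, b. repeat split; [exact Hr|now right].
Qed.

Lemma relevant_bounded q tau :
  relevant q tau -> pred_in_prog (qprog Q) q /\ tau <= tau0 Q tout + prog_radius (qprog Q).
Proof.
  intros [ps Hps]. split; [exact (reaches_pred_in_prog _ _ _ Hps)|].
  assert (Hlen : (length ps <= length (qprog Q))%nat).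
  { rewrite <- (length_map (fun r => apred (rhead r))).
    apply NoDup_incl_length; [apply (reaches_acyclic _ _ _ Hps)|exact (reaches_heads _ _ _ Hps)]. }
  pose proof (reaches_time_le _ _ _ Hps).
  pose proof (max_rule_radius_ge0 (qprog Q)).
  change (prog_radius (qprog Q)) with (Z.of_nat (length (qprog Q)) * max_rule_radius (qprog Q)).
  nia.
Qed.

Lemma rename_relevant_part_incl_bcu D tin oI h U :
  (forall c, critical_domain Q D oI c -> h c = c) ->
  (forall c, critical_domain Q D oI (h c)) ->
  update tin U ->
  forall f, rename_data h (union D (relevant_part U)) f -> union D (bcu Q D tin tout oI) f.
Proof.
  intros Hfix Hinto [[_ HUfacts] HUtime] f [g [[Dg|[Ug [vt Hrel]]] ->]].
  - left. rewrite rename_atom_id; [exact Dg|].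
    intros c Hc. apply Hfix. right; left. now exists g.
  - right. destruct (HUfacts g Ug) as [[Hwfg [_ Hground]] Hedb].
    destruct (HUtime g Ug) as [[n Hsig] [z [Hz Hlt]]].
    unfold atom_wf in Hwfg. rewrite Hsig in Hwfg.
    destruct (ground_temporal_args _ _ Hwfg Hground) as [os [z' [Hargs Hlen]]].
    rewrite (time_arg_split _ _ _ Hargs) in Hz. injection Hz as ->.
    rewrite (time_arg_split _ _ _ Hargs) in Hrel.
    destruct (relevant_bounded _ _ Hrel) as [Hpred Hle].
    exists (apred g), (map h os), z. repeat split; try assumption.
    + now exists n.
    + apply Forall_forall. intros x Hx. apply in_map_iff in Hx as [c [<- _]]. apply Hinto.
    + rewrite length_map, Hsig, length_app, repeat_length. simpl. lia.
    + destruct g as [p args]. simpl in Hargs |- *. subst args. apply rename_goal.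
Qed.

End Relevance.

Theorem lemma5 (Q : query) (D : dataset) (tin tout : Z) (oI : nat) :
  DTP_instance Q D tin tout ->
  nonrecursive (qprog Q) ->
  connected_query Q ->
  no_rigid_atoms (qprog Q) ->
  fresh_obj Q D oI ->
  (DTP Q D tin tout <->
   forall o : list nat,
     Forall (critical_domain Q D oI) o ->
     answers Q (union D (bcu Q D tin tout oI)) tout o ->
     answers Q D tout o).
Proof.
  intros [[[[_ Hwf] [_ Hgoal]] _] [[HD _] _]] Hnonrec Hconn Hnorigid [HfP HfD].
  split; [intros Hdtp o _; apply (Hdtp _ (bcu_update Q D tin tout oI HD))|].
  intros Hcrit U HU o. split.
  { intros [Hlen E]. split; [exact Hlen|]. revert E. apply entails_mono. now left. }
  intros [Hlen E].
  destruct (retraction_onto (critical_domain Q D oI) oI (or_intror (or_intror eq_refl)))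
    as [h [Hfix [Hout Hinto]]].
  assert (Ecut : answers Q (union D (bcu Q D tin tout oI)) tout (map h o)).
  { split; [now rewrite length_map|].
    eapply entails_mono; [exact (rename_relevant_part_incl_bcu Q tout Hwf Hnonrec Hconn
                                   Hnorigid Hgoal D tin oI h U Hfix Hinto HU)|].
    rewrite <- rename_goal. apply entails_rename; [intros c Hc; apply Hfix; now left|].
    apply entails_relevant_part;
      [reflexivity|now apply (time_arg_split _ (map OConst o))|exact E]. }
  destruct (Hcrit (map h o)) as [_ ED]; [|exact Ecut|].
  { apply Forall_forall. intros x Hx. apply in_map_iff in Hx as [c [<- _]]. apply Hinto. }
  assert (Ho : forall c, In c o -> h c = c).
  { intros c Hc. apply Hfix. apply NNPP. intros Hnot.
    apply (entails_avoids_fresh _ _ _ oI Hwf HD HfP HfD ED). apply in_or_app. left.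
    rewrite <- (Hout c Hnot). now apply in_map, in_map. }
  rewrite (map_ext_in _ _ _ Ho), map_id in ED. now split.
Qed.
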